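(* Let $K\ge1$, let $\mathbf{\Phi}\in\mathbb{R}^{m\times n}$ satisfy the RIP with $\delta_{K+1}<\frac{1}{\sqrt K+1}$, let $\mathbf{x}\in\mathbb{R}^n$ with $|\mathrm{supp}(\mathbf{x})|=K$, $\mathbf{v}\in\mathbb{R}^m$, $\mathbf{y}=\mathbf{\Phi}\mathbf{x}+\mathbf{v}$. If $$\sqrt{\mathrm{SNR}} > \frac{(\sqrt K+1)(1+\delta_{K+1})}{1-(\sqrt K+1)\delta_{K+1}},$$ then every index $t\in\arg\max_{i\in\Omega}|\langle\phi_i,\mathbf{y}\rangle|$ belongs to $\mathrm{supp}(\mathbf{x})$; i.e., the first iteration of OMP selects a correct index.
   Context: $\Omega=\{1,\dots,n\}$; $\phi_i$ is the $i$-th column of $\mathbf{\Phi}$. RIP: for an integer $s\ge1$, the isometry constant $\delta_s$ of $\mathbf{\Phi}$ is the smallest $c\in[0,1)$ such that $(1-c)\|\mathbf{z}\|_2^2 \le \|\mathbf{\Phi}\mathbf{z}\|_2^2 \le (1+c)\|\mathbf{z}\|_2^2$ for all $s$-sparse $\mathbf{z}$. $\mathrm{SNR} := \|\mathbf{\Phi}\mathbf{x}\|_2^2/\|\mathbf{v}\|_2^2$ ($+\infty$ if $\mathbf{v}=\mathbf{0}$). *)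

(* The reals are modelled by an arbitrary real closed field
   R : rcfType (the statement is purely algebraic/order-theoretic). *)
From HB Require Import structures.
From mathcomp Require Import all_boot all_order all_algebra.
Set Implicit Arguments. Unset Strict Implicit. Unset Printing Implicit Defensive.
Import Order.TTheory GRing.Theory Num.Theory.
Local Open Scope ring_scope.

Definition sqnorm (R : rcfType) (k : nat) (z : 'cV[R]_k) : R :=
  \sum_(i < k) z i 0 ^+ 2.

Definition supp (R : rcfType) (k : nat) (z : 'cV[R]_k) : {set 'I_k} :=
  [set i | z i 0 != 0].

Definition sparse (R : rcfType) (k s : nat) (z : 'cV[R]_k) : Prop :=
  (#|supp z| <= s)%N.

Definition rip_bound (R : rcfType) (m n s : nat) (Phi : 'M[R]_(m, n)) (c : R) : Prop :=
  forall z : 'cV[R]_n, sparse s z ->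
    (1 - c) * sqnorm z <= sqnorm (Phi *m z) /\ sqnorm (Phi *m z) <= (1 + c) * sqnorm z.

Definition isometry_const (R : rcfType) (m n s : nat) (Phi : 'M[R]_(m, n)) (delta : R) : Prop :=
  [/\ 0 <= delta, delta < 1, rip_bound s Phi delta &
      forall c, 0 <= c -> c < 1 -> rip_bound s Phi c -> delta <= c].

Definition phi_col (R : rcfType) (m n : nat) (Phi : 'M[R]_(m, n)) (i : 'I_n) : 'cV[R]_m :=
  col i Phi.

Definition inner (R : rcfType) (k : nat) (a b : 'cV[R]_k) : R :=
  \sum_(j < k) a j 0 * b j 0.

Definition omp_argmax (R : rcfType) (m n : nat) (Phi : 'M[R]_(m, n)) (y : 'cV[R]_m) (t : 'I_n) : Prop :=
  forall i : 'I_n, `|inner (phi_col Phi i) y| <= `|inner (phi_col Phi t) y|.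

(* sqrt(SNR) > bound, with SNR = ||Phi x||^2/||v||^2 and SNR = +oo if v = 0 *)
Definition sqrt_snr_gt (R : rcfType) (m n : nat) (Phi : 'M[R]_(m, n)) (x : 'cV[R]_n)
  (v : 'cV[R]_m) (bound : R) : Prop :=
  v = 0 \/ (v <> 0 /\ Num.sqrt (sqnorm (Phi *m x) / sqnorm v) > bound).

From HB Require Import structures.
From mathcomp Require Import all_boot all_order all_algebra.
From mathcomp Require Import ring lra.
Import Order.TTheory GRing.Theory Num.Theory.
Local Open Scope ring_scope.

(* Suppose the selected index t lies outside supp x.  Applying the RIP of
   order K + 1 to x + c e_t with c = +-||x|| (a polarization argument) gives
   |<Phi x, phi_t>| <= delta ||x||, hence
   |<phi_t, y>| <= delta ||x|| + sqrt(1 + delta) ||v||.  On the other hand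
   <Phi x, y> = sum_i x_i <phi_i, y> is at most ||x||_1 |<phi_t, y>|
   <= sqrt K ||x|| |<phi_t, y>| by maximality of t, and at least
   ||Phi x||^2 - ||Phi x|| ||v||.  Together with (1 - delta) ||x||^2 <= ||Phi x||^2
   this forces (1 - (sqrt K + 1) delta) ||Phi x|| <= (sqrt K + 1)(1 + delta) ||v||,
   contradicting the SNR assumption. *)

Section Euclidean.
Context {R : rcfType} {k : nat}.
Implicit Types (a b c z : 'cV[R]_k) (r : R).

Definition norm2 z := Num.sqrt (sqnorm z).

Lemma sqnorm_ge0 z : 0 <= sqnorm z.
Proof. by apply: sumr_ge0 => i _; rewrite sqr_ge0. Qed.

Lemma norm2_ge0 z : 0 <= norm2 z.
Proof. exact: sqrtr_ge0. Qed.

Lemma sqr_norm2 z : norm2 z ^+ 2 = sqnorm z.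
Proof. by rewrite sqr_sqrtr ?sqnorm_ge0. Qed.

Lemma sqnorm_eq0 z : (sqnorm z == 0) = (z == 0).
Proof.
rewrite psumr_eq0 => [|i _]; last exact: sqr_ge0.
apply/allP/eqP => [z0 | -> i _]; last by rewrite mxE sqrf_eq0 eqxx.
apply/matrixP => i j; rewrite ord1 mxE.
by have /implyP/(_ isT) := z0 i (mem_index_enum i); rewrite sqrf_eq0 => /eqP.
Qed.

Lemma sqnorm_gt0 z : (0 < sqnorm z) = (z != 0).
Proof. by rewrite lt0r sqnorm_eq0 sqnorm_ge0 andbT. Qed.

Lemma inner_sqnorm z : inner z z = sqnorm z.
Proof. by apply: eq_bigr => i _; rewrite expr2. Qed.

Lemma innerC a b : inner a b = inner b a.
Proof. by apply: eq_bigr => i _; rewrite mulrC. Qed.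

Lemma innerDr a b c : inner a (b + c) = inner a b + inner a c.
Proof. by rewrite /inner -big_split; apply: eq_bigr => i _ /=; rewrite !mxE mulrDr. Qed.

Lemma innerZl r a b : inner (r *: a) b = r * inner a b.
Proof. by rewrite /inner mulr_sumr; apply: eq_bigr => i _; rewrite mxE mulrA. Qed.

Lemma inner0r a : inner a 0 = 0.
Proof. by rewrite /inner big1 // => i _; rewrite mxE mulr0. Qed.

Lemma norm2_0 : norm2 0 = 0.
Proof. by rewrite /norm2 -inner_sqnorm inner0r sqrtr0. Qed.

Lemma sqnormZ r z : sqnorm (r *: z) = r ^+ 2 * sqnorm z.
Proof. by rewrite /sqnorm mulr_sumr; apply: eq_bigr => i _; rewrite mxE exprMn. Qed.

Lemma sqnormDZ a b r :
  sqnorm (a + r *: b) = sqnorm a + 2 * r * inner a b + r ^+ 2 * sqnorm b.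
Proof.
rewrite /sqnorm /inner !mulr_sumr -!big_split; apply: eq_bigr => i _.
by rewrite !mxE /=; ring.
Qed.

Lemma inner_sqr_le a b : inner a b ^+ 2 <= sqnorm a * sqnorm b.
Proof.
have [->|b0] := eqVneq b 0; first by rewrite inner0r expr0n mulr_ge0 ?sqnorm_ge0.
have B_gt0 : 0 < sqnorm b by rewrite sqnorm_gt0.
suff : 0 <= sqnorm b * (sqnorm a * sqnorm b - inner a b ^+ 2).
  by rewrite pmulr_rge0 // subr_ge0.
suff <- : sqnorm (sqnorm b *: a + (- inner a b) *: b) =
          sqnorm b * (sqnorm a * sqnorm b - inner a b ^+ 2) by exact: sqnorm_ge0.
by rewrite sqnormDZ sqnormZ innerZl; ring.
Qed.

Lemma norm_inner_le a b : `|inner a b| <= norm2 a * norm2 b.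
Proof.
rewrite -sqrtrM ?sqnorm_ge0 // -sqrtr_sqr ler_sqrt ?mulr_ge0 ?sqnorm_ge0 //.
exact: inner_sqr_le.
Qed.

Lemma inner_addr_ge a b : sqnorm a - norm2 a * norm2 b <= inner a (a + b).
Proof.
rewrite innerDr inner_sqnorm.
by have := norm_inner_le a b; rewrite ler_norml => /andP[+ _]; lra.
Qed.

Lemma sqnorm_delta t : sqnorm (delta_mx t 0 : 'cV[R]_k) = 1.
Proof.
rewrite /sqnorm (bigD1 t) //= big1 => [|i /negPf ti]; rewrite !mxE ?eqxx ?ti /=.
  by rewrite expr1n addr0.
by rewrite expr0n.
Qed.

Lemma inner_delta z t : inner z (delta_mx t 0) = z t 0.
Proof.
rewrite /inner (bigD1 t) //= big1 => [|i /negPf ti]; rewrite !mxE ?eqxx ?ti /=.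
  by rewrite mulr1 addr0.
by rewrite mulr0.
Qed.

(* Cauchy-Schwarz against the indicator vector of the support. *)
Lemma norm1_le_supp z : \sum_i `|z i 0| <= Num.sqrt #|supp z|%:R * norm2 z.
Proof.
pose u : 'cV[R]_k := \col_i `|z i 0|.
pose w : 'cV[R]_k := \col_i (i \in supp z)%:R.
have -> : \sum_i `|z i 0| = inner u w.
  apply: eq_bigr => i _; rewrite !mxE inE.
  by have [->|_] := eqVneq (z i 0) 0; rewrite ?normr0 ?mul0r ?mulr1.
have -> : Num.sqrt #|supp z|%:R * norm2 z = norm2 u * norm2 w.
  rewrite mulrC; congr (Num.sqrt _ * Num.sqrt _).
    by apply: eq_bigr => i _; rewrite mxE real_normK ?num_real.
  rewrite -sumr_const big_mkcond /=; apply: eq_bigr => i _; rewrite mxE.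
  by case: (i \in supp z); rewrite ?expr1n ?expr0n.
exact: le_trans (ler_norm _) (norm_inner_le u w).
Qed.

End Euclidean.

Section RIP.
Context {R : rcfType} {m n s : nat} {Phi : 'M[R]_(m, n)}.

Lemma inner_mulmx x y :
  inner (Phi *m x) y = \sum_(i < n) x i 0 * inner (col i Phi) y.
Proof.
rewrite /inner; under [RHS]eq_bigr do rewrite mulr_sumr.
rewrite exchange_big /=; apply: eq_bigr => j _.
rewrite !mxE big_distrl /=; apply: eq_bigr => i _; rewrite !mxE; ring.
Qed.

Lemma correlation_le_argmax x y t : omp_argmax Phi y t ->
  inner (Phi *m x) y <= Num.sqrt #|supp x|%:R * norm2 x * `|inner (col t Phi) y|.
Proof.
move=> tmax; rewrite inner_mulmx.
apply: le_trans (ler_wpM2r (normr_ge0 _) (norm1_le_supp x)).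
rewrite mulr_suml; apply: ler_sum => i _.
apply: le_trans (ler_norm _) _; rewrite normrM.
by apply: ler_wpM2l; [exact: normr_ge0 | exact: tmax].
Qed.

Context {d : R}.
Hypothesis rip : rip_bound s Phi d.

Lemma sqnorm_col_le t : (0 < s)%N -> sqnorm (col t Phi) <= 1 + d.
Proof.
move=> s_gt0; rewrite colE.
have e_sparse : sparse s (delta_mx t 0 : 'cV[R]_n).
  apply: leq_trans (leq_trans (subset_leq_card _) (eq_leq (cards1 t))) s_gt0.
  by apply/subsetP => i; rewrite !inE mxE; apply: contraR => /negPf ->; rewrite eqxx.
by have [_] := rip _ e_sparse; rewrite sqnorm_delta mulr1.
Qed.

Lemma norm_inner_col_le t v : (0 < s)%N ->
  `|inner (col t Phi) v| <= Num.sqrt (1 + d) * norm2 v.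
Proof.
move=> s_gt0; apply: le_trans (norm_inner_le _ _) _.
rewrite ler_wpM2r ?norm2_ge0 // ler_sqrt ?sqnorm_col_le //.
exact: le_trans (sqnorm_ge0 _) (sqnorm_col_le t s_gt0).
Qed.

Lemma norm_inner_off_supp x t : (#|supp x| < s)%N -> t \notin supp x ->
  `|inner (Phi *m x) (col t Phi)| <= d * norm2 x.
Proof.
move=> supp_lt t_off.
have [->|x0] := eqVneq x 0.
  by rewrite mulmx0 innerC inner0r normr0 norm2_0 mulr0.
have xt0 : x t 0 = 0 by move: t_off; rewrite inE negbK => /eqP.
have rip_shift c : (1 - d) * (sqnorm x + c ^+ 2) <= sqnorm (Phi *m (x + c *: delta_mx t 0))
    /\ sqnorm (Phi *m (x + c *: delta_mx t 0)) <= (1 + d) * (sqnorm x + c ^+ 2).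
  have -> : sqnorm x + c ^+ 2 = sqnorm (x + c *: delta_mx t 0).
    by rewrite sqnormDZ inner_delta xt0 sqnorm_delta; ring.
  apply: rip; apply: leq_trans supp_lt.
  apply: leq_trans (subset_leq_card (_ : _ \subset t |: supp x)) _; last by rewrite cardsU1 t_off.
  apply/subsetP => i; rewrite !inE !mxE; apply: contraR.
  by rewrite negb_or negbK => /andP[/negPf -> /eqP ->]; rewrite mulr0 add0r.
rewrite colE; set J := inner (Phi *m x) (Phi *m delta_mx t 0).
have expand c : sqnorm (Phi *m (x + c *: delta_mx t 0)) =
    sqnorm (Phi *m x) + 2 * c * J + c ^+ 2 * sqnorm (Phi *m delta_mx t 0).
  by rewrite mulmxDr -scalemxAr sqnormDZ.
set b := norm2 x.
have b_gt0 : 0 < b by rewrite sqrtr_gt0 sqnorm_gt0.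
have [lo_pos hi_pos] := rip_shift b; have [lo_neg hi_neg] := rip_shift (- b).
rewrite !expand -(sqr_norm2 x) -/b sqrrN in lo_pos hi_pos lo_neg hi_neg.
rewrite ler_norml -(ler_pM2l b_gt0) -[X in _ && X](ler_pM2l b_gt0).
by apply/andP; split; lra.
Qed.

End RIP.

(* Multiply the last hypothesis by 1 - d = c^2 and use b c <= a and
   sqrt(1 + d) c <= 1 + d. *)
Lemma recovery_margin_le {R : rcfType} (s d a b nv : R) :
  0 <= s -> 0 <= d -> d < 1 -> 0 <= b -> 0 < a -> 0 <= nv ->
  (1 - d) * b ^+ 2 <= a ^+ 2 ->
  a ^+ 2 - a * nv <= s * b * (d * b + Num.sqrt (1 + d) * nv) ->
  a * (1 - (s + 1) * d) <= (s + 1) * (1 + d) * nv.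
Proof.
move=> s0 d0 d1 b0 a_gt0 nv0 rip_lo corr.
set p := Num.sqrt (1 + d); set c := Num.sqrt (1 - d).
have p0 : 0 <= p := sqrtr_ge0 _.
have c0 : 0 <= c := sqrtr_ge0 _.
have cc : c ^+ 2 = 1 - d by rewrite sqr_sqrtr //; lra.
have bc_sqr : (b * c) ^+ 2 <= a ^+ 2 by rewrite exprMn cc mulrC.
have bc_le : b * c <= a by have := mulr_ge0 b0 c0; nra.
have pc_le : p * c <= 1 + d.
  rewrite -sqrtrM; last lra.
  rewrite -[X in _ <= X]ger0_norm; last lra.
  by rewrite -sqrtr_sqr ler_sqrt ?sqr_ge0 //; nra.
have key : (1 - d) * (a ^+ 2 - a * nv) <= s * d * a ^+ 2 + s * a * (1 + d) * nv.
  have scaled : (1 - d) * (a ^+ 2 - a * nv) <=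
      s * d * (b * c) ^+ 2 + s * (b * c) * (p * c) * nv.
    rewrite -cc; apply: le_trans (ler_wpM2l (sqr_ge0 c) corr) _.
    by rewrite le_eqVlt -/p; apply/orP; left; apply/eqP; ring.
  apply: le_trans scaled _; apply: lerD.
    by rewrite ler_wpM2l ?mulr_ge0.
  apply: (ler_wpM2r nv0); rewrite -mulrA -[s * a * _]mulrA; apply: (ler_wpM2l s0).
  exact: ler_pM (mulr_ge0 b0 c0) (mulr_ge0 p0 c0) bc_le pc_le.
rewrite -(ler_pM2l a_gt0); have := mulr_ge0 (mulr_ge0 d0 (ltW a_gt0)) nv0; nra.
Qed.

Lemma sqrt_snr_gt_lt {R : rcfType} {m n : nat} {Phi : 'M[R]_(m, n)} {x v} {B : R} :
  0 < sqnorm (Phi *m x) -> sqrt_snr_gt Phi x v B ->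
  B * norm2 v < norm2 (Phi *m x).
Proof.
move=> A_gt0 [-> | [/eqP v0 snr]].
  by rewrite norm2_0 mulr0 sqrtr_gt0.
have nv_gt0 : 0 < norm2 v by rewrite sqrtr_gt0 sqnorm_gt0.
by move: snr; rewrite sqrtrM ?sqnorm_ge0 // sqrtrV ?sqnorm_ge0 // ltr_pdivlMr.
Qed.

Theorem mainTheorem5 (R : rcfType) (m n K : nat) (Phi : 'M[R]_(m, n)) (delta : R)
  (x : 'cV[R]_n) (v y : 'cV[R]_m) :
  (1 <= K)%N ->
  isometry_const K.+1 Phi delta ->
  delta < 1 / (Num.sqrt (K%:R) + 1) ->
  #|supp x| = K ->
  y = Phi *m x + v ->
  sqrt_snr_gt Phi x v
    ((Num.sqrt (K%:R) + 1) * (1 + delta) / (1 - (Num.sqrt (K%:R) + 1) * delta)) ->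
  forall t : 'I_n, omp_argmax Phi y t -> t \in supp x.
Proof.
move=> K_gt0 [d0 d1 rip _] d_small supp_x -> snr t t_max; apply: contraT => t_off.
set s := Num.sqrt K%:R in d_small snr.
have margin_gt0 : 0 < 1 - (s + 1) * delta.
  by rewrite subr_gt0 mulrC -ltr_pdivlMr //; exact: ltr_wpDl (sqrtr_ge0 _) ltr01.
have x_gt0 : 0 < sqnorm x.
  rewrite sqnorm_gt0; apply: contraTneq K_gt0 => x0.
  by rewrite -supp_x x0 (eq_card0 (_ : supp 0 =i pred0)) // => i; rewrite inE mxE eqxx.
have x_sparse : sparse K.+1 x by rewrite /sparse supp_x.
have [rip_lo _] := rip x x_sparse.
have Phix_gt0 : 0 < sqnorm (Phi *m x).
  by apply: lt_le_trans rip_lo; rewrite mulr_gt0 ?subr_gt0.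
have corr_t : `|inner (col t Phi) (Phi *m x + v)| <=
    delta * norm2 x + Num.sqrt (1 + delta) * norm2 v.
  rewrite innerDr innerC; apply: le_trans (ler_normD _ _) (lerD _ _).
    by apply: (norm_inner_off_supp rip); rewrite ?supp_x.
  exact: (norm_inner_col_le rip).
have corr := correlation_le_argmax x _ _ t_max; rewrite supp_x -/s in corr.
have bound : norm2 (Phi *m x) * (1 - (s + 1) * delta) <= (s + 1) * (1 + delta) * norm2 v.
  apply: recovery_margin_le (sqrtr_ge0 _) d0 d1 (norm2_ge0 x) _ (norm2_ge0 v) _ _.
  - by rewrite sqrtr_gt0.
  - by rewrite !sqr_norm2.
  - rewrite sqr_norm2; apply: le_trans (inner_addr_ge _ _) (le_trans corr _).
    by rewrite ler_wpM2l ?mulr_ge0 ?sqrtr_ge0 ?norm2_ge0.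
have := sqrt_snr_gt_lt Phix_gt0 snr.
by rewrite mulrAC ltr_pdivrMr // ltNge bound.
Qed.
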